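(* Let $f:X_1\to X_2$ be an L-morphism between L-spaces. (1) If $f$ is proper and $X_1$ is an algebraic L-space, then $f$ is coherent. (2) If $f$ is coherent and $X_2$ is an algebraic L-space, then $f$ is proper. (3) If $X_1$ and $X_2$ are algebraic L-spaces, then $f$ is coherent if and only if $f$ is proper.
   Context: A Priestley space is a Stone space $X$ with a partial order such that clopen upsets separate points. An L-space is a Priestley space in which the downset of each clopen set is clopen and the closure of each open upset is open. ${\sf ClopUp}(X)$ is the set of clopen upsets; $\mathrm{cl}$ denotes closure. An L-morphism is a continuous order-preserving map $f:X\to X'$ between L-spaces with $f^{-1}(\mathrm{cl}\,U)=\mathrm{cl}\,f^{-1}(U)$ for every open upset $U$ of $X'$. The spatial part of $X$ is $Y=\{y\in X\mid{\downarrow}y\text{ clopen}\}$. A Scott upset is a closed upset $F$ with $\min F\subseteq Y$; ${\sf ClopSUp}(X)$ is the set of clopen Scott upsets. For $U,V\in{\sf ClopUp}(X)$, $V\ll U$ means that for every open upset $W$, $U\subseteq\mathrm{cl}\,W$ implies $V\subseteq W$; $\ker U=\bigcup\{V\in{\sf ClopUp}(X)\mid V\ll U\}$; $\mathrm{core}\,U=\bigcup\{V\in{\sf ClopSUp}(X)\mid V\subseteq U\}$. $X$ is an algebraic L-space if $\mathrm{core}\,U$ is dense in $U$ for each $U\in{\sf ClopUp}(X)$. An L-morphism $f:X_1\to X_2$ is proper if $f^{-1}(\ker U)\subseteq\ker f^{-1}(U)$ for all $U\in{\sf ClopUp}(X_2)$, and coherent if $f^{-1}(\mathrm{core}\,U)\subseteq\mathrm{core}\,f^{-1}(U)$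 for all $U\in{\sf ClopUp}(X_2)$. *)

From HB Require Import structures.
From mathcomp Require Import all_boot all_order.
From mathcomp Require Import all_classical all_reals all_analysis.

Set Implicit Arguments.
Unset Strict Implicit.
Unset Printing Implicit Defensive.

Local Open Scope classical_set_scope.

Section LSpaces.
Context {X : topologicalType} (le : X -> X -> Prop).

Definition is_partial_order : Prop :=
  [/\ (forall x, le x x),
      (forall x y, le x y -> le y x -> x = y) &
      (forall x y z, le x y -> le y z -> le x z)].

Definition stone_space : Prop :=
  [/\ compact [set: X], hausdorff_space X & totally_disconnected [set: X]].

Definition upset (U : set X) : Prop := forall x y, U x -> le x y -> U y.

Definition down (A : set X) : set X := [set y | exists2 x, A x & le y x].

Definition clopen_upset (U : set X) : Prop := clopen U /\ upset U.

Definition priestley_space : Prop :=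
  [/\ stone_space, is_partial_order &
      (forall x y, ~ le x y -> exists U, [/\ clopen_upset U, U x & ~ U y])].

Definition L_space : Prop :=
  [/\ priestley_space,
      (forall U : set X, clopen U -> clopen (down U)) &
      (forall U : set X, open U -> upset U -> open (closure U))].

Definition spatial_part : set X := [set y | clopen (down [set y])].

Definition minimal_elts (F : set X) : set X :=
  [set x | F x /\ forall z, F z -> le z x -> z = x].

Definition scott_upset (F : set X) : Prop :=
  [/\ closed F, upset F & minimal_elts F `<=` spatial_part].

Definition clopen_scott_upset (U : set X) : Prop := clopen U /\ scott_upset U.

Definition way_below (V U : set X) : Prop :=
  forall W : set X, open W -> upset W -> U `<=` closure W -> V `<=` W.

Definition ker (U : set X) : set X :=
  [set x | exists V, [/\ clopen_upset V, way_below V U & V x]].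

Definition core (U : set X) : set X :=
  [set x | exists V, [/\ clopen_scott_upset V, V `<=` U & V x]].

Definition algebraic_L_space : Prop :=
  L_space /\ forall U, clopen_upset U -> U `<=` closure (core U).

End LSpaces.

Section Morphisms.
Context {X1 X2 : topologicalType} (le1 : X1 -> X1 -> Prop)
  (le2 : X2 -> X2 -> Prop) (f : X1 -> X2).

Definition L_morphism : Prop :=
  [/\ continuous f,
      (forall x y, le1 x y -> le2 (f x) (f y)) &
      (forall U : set X2, open U -> upset le2 U ->
         f @^-1` (closure U) = closure (f @^-1` U))].

Definition proper_morphism : Prop :=
  forall U : set X2, clopen_upset le2 U ->
    f @^-1` (ker le2 U) `<=` ker le1 (f @^-1` U).

Definition coherent_morphism : Prop :=
  forall U : set X2, clopen_upset le2 U ->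
    f @^-1` (core le2 U) `<=` core le1 (f @^-1` U).

End Morphisms.

From mathcomp Require Import all_boot all_order.
From mathcomp Require Import all_classical all_reals all_analysis.

(* In a Priestley space [core U] is always contained in [ker U]: every point of
   a clopen Scott upset V lies above a minimal point m of V, and since m is in
   the spatial part, the open set down m is a neighbourhood of m; hence if
   U is contained in [cl W] then down m meets the upset W, so W contains m and
   everything above it.  In an algebraic L-space the converse holds as well,
   because [core U] is an open upset whose closure contains U.  So ker and
   core coincide on algebraic L-spaces, and properness and coherence become
   the same inclusion. *)

Set Implicit Arguments.
Unset Strict Implicit.
Unset Printing Implicit Defensive.
Local Open Scope classical_set_scope.

Section MinimalElements.
Variables (X : topologicalType) (le : X -> X -> Prop).
Hypotheses (le_po : is_partial_order le) (compactX : compact [set: X])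
  (closed_below : forall c, closed [set y | le y c]).

Lemma finite_chain_lower_bound (D : set X) x (s : seq X) :
  D x -> total_on D le -> (forall i, i \in s -> D i) ->
  exists2 m, D m & forall i, i \in s -> le m i.
Proof.
have [le_refl _ le_trans] := le_po; move=> Dx totD.
elim: s => [|a s IHs] sD; first by exists x => // i; rewrite in_nil.
have [|m Dm ms] := IHs; first by move=> i si; apply: sD; rewrite in_cons si orbT.
have Da : D a by apply: sD; rewrite in_cons eqxx.
have [ma|am] := totD m a Dm Da.
  by exists m => // i; rewrite in_cons => /orP[/eqP->//|/ms].
exists a => // i; rewrite in_cons => /orP[/eqP->|/ms]; first exact: le_refl.
exact: le_trans.
Qed.

Lemma closed_chain_lower_bound (S D : set X) x :
  closed S -> D `<=` S -> D x -> total_on D le ->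
  exists2 p, S p & forall c, D c -> le p c.
Proof.
move=> closedS DS Dx totD.
pose below c := S `&` [set y | le y c].
have finI_below : finI D below.
  move=> F FD; have [|m Dm mF] := finite_chain_lower_bound (s := finmap.enum_fset F) Dx totD.
    by move=> i /FD; rewrite inE.
  by exists m => i /mF mi; split => //; apply: DS.
have below_filter := finI_filter finI_below.
have [p [_]] := compactX below_filter filterT; rewrite clusterE => clp.
have below_p c : D c -> below c p.
  move=> Dc; rewrite (closure_id (below c)).1; last exact: closedI.
  by apply: clp; exists (below c) => //; apply: finI_from1.
by have [Sp _] := below_p _ Dx; exists p => // c /below_p[].
Qed.

Lemma exists_minimal_below (S : set X) x :
  closed S -> S x -> exists2 m, minimal_elts le S m & le m x.
Proof.
have [le_refl le_anti le_trans] := le_po; move=> closedS Sx.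
(* Zorn for the reverse order on the points of S below x. *)
pose T := {y | S y /\ le y x}.
pose R (a b : T) := `[< le (sval b) (sval a) >].
have [[m [Sm mx]] mmax] : exists t : T, forall s, R t s -> s = t.
  apply: Zorn.
  - by move=> ?; apply/asboolP.
  - by move=> r s t /asboolP sr /asboolP ts; apply/asboolP; apply: le_trans ts sr.
  - by move=> [a ?] [b ?] /asboolP ? /asboolP ?; apply: eq_exist; apply: le_anti.
  move=> A totA; pose D := sval @` A `|` [set x].
  have [||p Sp pD] := @closed_chain_lower_bound S D x closedS _ (or_intror erefl).
  - by move=> _ [[[a [Sa ax]] Aa <-]|->].
  - move=> _ _ [[[a [Sa ax]] Aa <-]|->] [[[b [Sb bx]] Ab <-]|->] /=.
    + by case: (totA _ _ Aa Ab) => /asboolP; [right|left].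
    + by left.
    + by right.
    + by left.
  exists (exist _ p (conj Sp (pD x (or_intror erefl)))) => s As.
  by apply/asboolP; apply: pD; left; exists s.
exists m => //; split => // z Sz zm.
by have /(congr1 sval) := mmax (exist _ z (conj Sz (le_trans _ _ _ zm mx))) (asboolT zm).
Qed.

End MinimalElements.

Section Core.
Variables (X : topologicalType) (le : X -> X -> Prop).

Lemma open_core U : open (core le U).
Proof.
have -> : core le U = \bigcup_(V in [set V | clopen_scott_upset le V /\ V `<=` U]) V.
  by apply/seteqP; split => y [V] []; exists V.
by apply: bigcup_open => V [[[]]].
Qed.

Lemma upset_core U : upset le (core le U).
Proof.
move=> y z [V [scottV VU Vy]] yz; exists V; split => //.
by case: scottV => _ [_ upV _]; apply: upV yz.
Qed.

Section Priestley.
Hypothesis priestleyX : priestley_space le.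

Lemma closed_principal_down c : closed [set y | le y c].
Proof.
case: priestleyX => _ _ separate y cly; apply/not_notP => nyc.
have [U [[[openU _] upU] Uy nUc]] := separate _ _ nyc.
have [z [zc Uz]] := cly U (open_nbhs_nbhs (conj openU Uy)).
by apply: nUc; apply: upU zc.
Qed.

Lemma scott_upset_way_below V U : scott_upset le V -> V `<=` U -> way_below le V U.
Proof.
case: priestleyX => [[compactX _ _] le_po _] [closedV upV minV] VU W openW upW UW y Vy.
have [m [Vm minm] my] :=
  exists_minimal_below le_po compactX closed_principal_down closedV Vy.
have [openDm _] : spatial_part le m := minV m (conj Vm minm).
have [le_refl _ _] := le_po.
have [w [Ww [_ -> wm]]] :=
  UW m (VU m Vm) _ (open_nbhs_nbhs (conj openDm (ex_intro2 _ _ m erefl (le_refl m)))).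
exact: upW (upW _ _ Ww wm) my.
Qed.

Lemma core_sub_ker U : core le U `<=` ker le U.
Proof.
move=> x [V [[clopenV scottV] VU Vx]]; exists V; split => //.
  by split => //; case: scottV.
exact: scott_upset_way_below.
Qed.

End Priestley.

Lemma ker_eq_core U : algebraic_L_space le -> clopen_upset le U -> ker le U = core le U.
Proof.
move=> [[priestleyX _ _] dense_core] cU; apply/seteqP; split; last exact: core_sub_ker.
by move=> x [V [_ VU Vx]]; apply: VU (open_core U) (@upset_core U) (dense_core U cU) _ Vx.
Qed.

End Core.

Lemma clopen_upset_preimage (X1 X2 : topologicalType)
    (le1 : X1 -> X1 -> Prop) (le2 : X2 -> X2 -> Prop) (f : X1 -> X2) U :
  continuous f -> (forall x y, le1 x y -> le2 (f x) (f y)) ->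
  clopen_upset le2 U -> clopen_upset le1 (f @^-1` U).
Proof.
move=> fcont fmono [[openU closedU] upU]; split; first split.
- by apply: open_comp => // x _; apply: fcont.
- by apply: preimage_closed => // x _; apply: fcont.
- by move=> x y Ufx xy; apply: upU (fmono _ _ xy).
Qed.

Theorem lemma4p7 (X1 X2 : topologicalType)
  (le1 : X1 -> X1 -> Prop) (le2 : X2 -> X2 -> Prop) (f : X1 -> X2) :
  L_space le1 -> L_space le2 -> L_morphism le1 le2 f ->
  [/\ (proper_morphism le1 le2 f -> algebraic_L_space le1 ->
         coherent_morphism le1 le2 f),
      (coherent_morphism le1 le2 f -> algebraic_L_space le2 ->
         proper_morphism le1 le2 f) &
      (algebraic_L_space le1 -> algebraic_L_space le2 ->
         (coherent_morphism le1 le2 f <-> proper_morphism le1 le2 f))].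
Proof.
move=> [priestley1 _ _] [priestley2 _ _] [fcont fmono _].
have cU_pre U := @clopen_upset_preimage _ _ le1 le2 f U fcont fmono.
have proper_coherent : proper_morphism le1 le2 f -> algebraic_L_space le1 ->
    coherent_morphism le1 le2 f.
  move=> fproper alg1 U cU x /(core_sub_ker priestley2)/(fproper U cU).
  by rewrite (ker_eq_core alg1 (cU_pre U cU)).
have coherent_proper : coherent_morphism le1 le2 f -> algebraic_L_space le2 ->
    proper_morphism le1 le2 f.
  move=> fcoherent alg2 U cU x; rewrite (ker_eq_core alg2 cU) => /(fcoherent U cU).
  exact: core_sub_ker.
split => // alg1 alg2; split => ?; [exact: coherent_proper|exact: proper_coherent].
Qed.
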